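(* Let $\mathbb G=V_1\times V_2$ be a step-two Carnot group of Métivier's type, i.e. for every $x\in V_1\setminus\{0\}$ the map $x'\in V_1\mapsto[x,x']\in V_2$ is surjective. Then $\mathcal A_h(\mathbb G)=\mathcal A(V_1\times V_2)$.
   Context: A step-two Carnot group is $\mathbb G=V_1\times V_2$ ($V_1,V_2$ finite-dimensional real vector spaces, $V_2\ne\{0\}$) with a bilinear skew-symmetric $[\cdot,\cdot]:V_1\times V_1\to V_2$ whose image spans $V_2$, and group law $(x,z)\cdot(x',z')=(x+x',z+z'+[x,x'])$. $\mathcal A_h(\mathbb G)$ is the space of maps $f:\mathbb G\to\mathbb R$ such that for all $(x,z)\in\mathbb G$, $y\in V_1$, $t\mapsto f((x,z)\cdot(ty,0))$ is affine; $\mathcal A(V_1\times V_2)$ is the space of maps affine in the usual sense on $V_1\times V_2$. *)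

From HB Require Import structures.
From mathcomp Require Import all_boot all_order all_algebra.
From mathcomp Require Import reals.
Set Implicit Arguments. Unset Strict Implicit. Unset Printing Implicit Defensive.
Import Order.TTheory GRing.Theory Num.Theory.
Local Open Scope ring_scope.

Section Carnot.
Variables (R : realType) (V1 V2 : vectType R).

Definition bilinear_br (br : V1 -> V1 -> V2) : Prop :=
  (forall x, linear (br x)) /\ (forall y, linear (fun x => br x y)).

Definition skew_br (br : V1 -> V1 -> V2) : Prop :=
  forall x y, br x y = - br y x.

Definition br_spans (br : V1 -> V1 -> V2) : Prop :=
  forall z : V2, exists n (c : 'I_n -> R) (xs ys : 'I_n -> V1),
    z = \sum_(i < n) c i *: br (xs i) (ys i).

Definition step_two_carnot (br : V1 -> V1 -> V2) : Prop :=
  [/\ (exists z : V2, z != 0), bilinear_br br, skew_br br & br_spans br].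

Definition gmul (br : V1 -> V1 -> V2) (p q : V1 * V2) : V1 * V2 :=
  (p.1 + q.1, p.2 + q.2 + br p.1 q.1).

Definition metivier (br : V1 -> V1 -> V2) : Prop :=
  forall x : V1, x != 0 -> forall z : V2, exists x' : V1, br x x' = z.

Definition affine_R (g : R -> R) : Prop :=
  exists a b : R, forall t, g t = a + b * t.

Definition h_affine (br : V1 -> V1 -> V2) (f : V1 * V2 -> R) : Prop :=
  forall (p : V1 * V2) (y : V1), affine_R (fun t => f (gmul br p (t *: y, 0))).

Definition linear_prod (L : V1 * V2 -> R) : Prop :=
  forall (a : R) (p q : V1 * V2),
    L (a *: p.1 + q.1, a *: p.2 + q.2) = a * L p + L q.

Definition affine_prod (f : V1 * V2 -> R) : Prop :=
  exists (c : R) (L : V1 * V2 -> R), linear_prod L /\ forall p, f p = c + L p.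

End Carnot.

(* A horizontally affine f is affine along every horizontal line
   t |-> (x + t y, z + t [x, y]).  By Metivier's condition a vertical vector
   w is a bracket [x0, y0], and (x, z + l w) is the midpoint of two points on
   horizontal lines that move affinely with l; hence f (x, .) is affine and
   f (x, z) = f (x, 0) + L_x z with L_x linear.  Horizontal lines also make
   x |-> L_x v affine, so the mixed term M x v = L_x v - L_0 v is bilinear and
   t |-> f (x + t y, 0) + t^2 M y [x, y] is affine.  Replacing x by 2 x, and
   using that f (., 0) is affine along rays from 0, leaves an affine function
   6 t^2 M y [x, y], so M y [x, y] = 0; every v is such a bracket, so M = 0,
   f (x, z) = f (x, 0) + L_0 z, and f (., 0) is affine on lines, hence affine. *)

From HB Require Import structures.
From mathcomp Require Import all_boot all_algebra sesquilinear.
From mathcomp Require Import reals.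
From mathcomp Require Import ring lra.
Set Implicit Arguments. Unset Strict Implicit. Unset Printing Implicit Defensive.
Import GRing.Theory Num.Theory.
Local Open Scope ring_scope.

Section AffineReal.
Variable R : realType.
Implicit Types (g h : R -> R) (c : R).

Lemma eq_affine_R g h : g =1 h -> affine_R g -> affine_R h.
Proof. by move=> eq_gh [a [b gE]]; exists a, b => t; rewrite -eq_gh gE. Qed.

Lemma affine_RE g : affine_R g -> forall t, g t = g 0 + t * (g 1 - g 0).
Proof. by move=> [a [b gE]] t; rewrite !gE; ring. Qed.

Lemma affine_R_cst c : affine_R (fun=> c).
Proof. by exists c, 0 => t; ring. Qed.

Lemma affine_RD g h : affine_R g -> affine_R h -> affine_R (fun t => g t + h t).
Proof.
by move=> [a [b gE]] [a' [b' hE]]; exists (a + a'), (b + b') => t; rewrite gE hE; ring.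
Qed.

Lemma affine_RZ c g : affine_R g -> affine_R (fun t => c * g t).
Proof. by move=> [a [b gE]]; exists (c * a), (c * b) => t; rewrite gE; ring. Qed.

Lemma affine_RB g h : affine_R g -> affine_R h -> affine_R (fun t => g t - h t).
Proof.
move=> g_aff /(affine_RZ (-1)) h_aff.
by apply: eq_affine_R (affine_RD g_aff h_aff) => t; ring.
Qed.

Lemma affine_R_comp_mul c g : affine_R g -> affine_R (fun t => g (c * t)).
Proof. by move=> [a [b gE]]; exists a, (b * c) => t; rewrite gE; ring. Qed.

Lemma affine_R_sqr_eq0 c : affine_R (fun t => c * t ^+ 2) -> c = 0.
Proof. by move=> [a [b gE]]; have := gE 0; have := gE 1; have := gE (-1); lra. Qed.

End AffineReal.

Section AffineOnLines.
Variables (R : realType) (V : lmodType R).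

Definition affine_on_lines (phi : V -> R) : Prop :=
  forall z v, affine_R (fun t => phi (z + t *: v)).

Variable phi : V -> R.
Hypothesis phi_aff : affine_on_lines phi.

Lemma affine_on_linesZ (a : R) z : phi (a *: z) - phi 0 = a * (phi z - phi 0).
Proof.
have := affine_RE (phi_aff 0 z) a.
by rewrite !add0r scale0r scale1r => ->; ring.
Qed.

Lemma affine_on_linesD z1 z2 :
  phi (z1 + z2) - phi 0 = (phi z1 - phi 0) + (phi z2 - phi 0).
Proof.
have two_neq0 : (2 : R) != 0 by rewrite pnatr_eq0.
have mid : 2 *: z1 + 2^-1 *: (2 *: z2 - 2 *: z1) = z1 + z2.
  rewrite -scalerBr scalerA mulVf // scale1r -[2]/(1 + 1 : R) scalerDl scale1r.
  by rewrite addrCA addrK addrC.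
have := affine_RE (phi_aff (2 *: z1) (2 *: z2 - 2 *: z1)) 2^-1.
rewrite mid scale0r addr0 scale1r [2 *: z1 + (_ - _)]addrC subrK => ->.
have := affine_on_linesZ 2 z1; have := affine_on_linesZ 2 z2.
lra.
Qed.

Lemma affine_on_lines_linear (a : R) z1 z2 :
  phi (a *: z1 + z2) - phi 0 = a * (phi z1 - phi 0) + (phi z2 - phi 0).
Proof. by rewrite affine_on_linesD affine_on_linesZ. Qed.

End AffineOnLines.

Section Carnot.
Variables (R : realType) (V1 V2 : vectType R) (br : {bilinear V1 -> V1 -> V2}).

Lemma affine_prod_h_affine f : affine_prod f -> h_affine br f.
Proof.
move=> [c [L [L_lin fE]]] [x z] y.
exists (c + L (x, z)), (L (y, br x y)) => t.
rewrite fE /gmul /= addr0 linearZr_LR [x + _]addrC [z + _]addrC.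
by have /= -> := L_lin t (y, br x y) (x, z); ring.
Qed.

Lemma br_spans_nontrivial :
  br_spans br -> (exists z : V2, z != 0) -> exists x : V1, x != 0.
Proof.
move=> spans [z z_neq0]; have [n [c [xs [ys zE]]]] := spans z.
have [i xi_neq0 | xs_eq0] := pickP (fun i => xs i != 0); first by exists (xs i).
move: z_neq0; rewrite zE big1 ?eqxx // => i _.
by move/negbFE/eqP: (xs_eq0 i) => ->; rewrite linear0l scaler0.
Qed.

Lemma br_shift x u v (l : R) :
  br x (u + l *: v) + l *: br u v = br x u + l *: br (x + u) v.
Proof. by rewrite linearDr linearDl linearZr_LR scalerDr addrA. Qed.

Variable f : V1 * V2 -> R.
Hypothesis f_haff : h_affine br f.

Lemma h_affine_line x z y : affine_R (fun t => f (x + t *: y, z + t *: br x y)).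
Proof.
by apply: eq_affine_R (f_haff (x, z) y) => t; rewrite /gmul /= addr0 linearZr_LR.
Qed.

Hypothesis br_metivier : metivier br.
Hypothesis V1_nontrivial : exists x0 : V1, x0 != 0.

Lemma vertical_affine x : affine_on_lines (fun z => f (x, z)).
Proof.
move=> z w; have [x0 x0_neq0] := V1_nontrivial; have [y0 w_def] := br_metivier x0_neq0 w.
pose g u v l := f (x + u + l *: v, z + br x u + l *: br (x + u) v).
have g_aff u v : affine_R (g u v) by exact: h_affine_line.
have gE u v l : br u v = w ->
    f (x + (u + l *: v), z + l *: w + br x (u + l *: v)) = g u v l.
  by move=> <-; rewrite /g addrA -[z + _ + _]addrA [l *: _ + _]addrC br_shift addrA.
suff fE l : f (x, z + l *: w) = 2^-1 * (g x0 y0 l + g (- x0) (- y0) l).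
  apply: eq_affine_R (affine_RZ 2^-1 (affine_RD (g_aff _ _) (g_aff _ _))) => l.
  by rewrite fE.
have := affine_RE (h_affine_line x (z + l *: w) (x0 + l *: y0)) (-1).
rewrite !scale0r !addr0 !scale1r gE // !scaleN1r -linearNr opprD -scalerN.
rewrite gE => [->|]; last by rewrite linearNl linearNr opprK.
lra.
Qed.

Definition hpart x := f (x, 0).
Definition vpart x z := f (x, z) - f (x, 0).
Definition mixed x z := vpart x z - vpart 0 z.

Lemma vpart_linear x (a : R) z1 z2 :
  vpart x (a *: z1 + z2) = a * vpart x z1 + vpart x z2.
Proof. exact: (affine_on_lines_linear (vertical_affine x) a z1 z2). Qed.

Lemma vpartZ x (a : R) z : vpart x (a *: z) = a * vpart x z.
Proof. by have := vpart_linear x a z 0; rewrite addr0 /vpart subrr addr0. Qed.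

Lemma vpart_affine_on_lines z : affine_on_lines (vpart^~ z).
Proof.
move=> x y.
apply: eq_affine_R (affine_RB (h_affine_line x z y) (h_affine_line x 0 y)) => t.
by have := vpart_linear (x + t *: y) 1 z (t *: br x y); rewrite /vpart scale1r add0r; lra.
Qed.

Lemma mixed_linear (a : R) x1 x2 z : mixed (a *: x1 + x2) z = a * mixed x1 z + mixed x2 z.
Proof. exact: (affine_on_lines_linear (vpart_affine_on_lines z) a x1 x2). Qed.

Lemma mixedZr x (a : R) z : mixed x (a *: z) = a * mixed x z.
Proof. by rewrite /mixed !vpartZ; ring. Qed.

Lemma hpart_quadratic x y :
  affine_R (fun t => hpart (x + t *: y) + t ^+ 2 * mixed y (br x y)).
Proof.
set b := br x y; have lin : affine_R (fun t => t * (vpart 0 b + mixed x b)).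
  by exists 0, (vpart 0 b + mixed x b) => t; ring.
apply: eq_affine_R (affine_RB (h_affine_line x 0 y) lin) => t.
rewrite add0r -/b.
have -> : f (x + t *: y, t *: b) = hpart (x + t *: y) + t * vpart (x + t *: y) b.
  by rewrite -vpartZ /vpart /hpart; ring.
have -> : vpart (x + t *: y) b = vpart 0 b + mixed (t *: y + x) b.
  by rewrite addrC /mixed; ring.
by rewrite mixed_linear; ring.
Qed.

Lemma hpartZ (l : R) x : hpart (l *: x) = hpart 0 + l * (hpart x - hpart 0).
Proof.
have := affine_RE (h_affine_line 0 0 x) l.
by rewrite /hpart linear0l !scaler0 !add0r scale0r scale1r.
Qed.

Lemma mixed_br_eq0 x y : mixed y (br x y) = 0.
Proof.
set m := mixed y (br x y).
have q1 := affine_RZ 2 (hpart_quadratic x y).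
have q2 := affine_R_comp_mul 2 (hpart_quadratic (2 *: x) y).
suff /affine_R_sqr_eq0 : affine_R (fun t => 6 * m * t ^+ 2) by lra.
apply: eq_affine_R (affine_RD (affine_RB q2 q1) (affine_R_cst (hpart 0))) => t /=.
by rewrite linearZl_LR mixedZr -/m -scalerA -scalerDr hpartZ; ring.
Qed.

Hypothesis br_skew : skew_br br.

Lemma mixed_eq0 y z : mixed y z = 0.
Proof.
have [->|y_neq0] := eqVneq y 0; first by rewrite /mixed subrr.
have [x xE] := br_metivier y_neq0 (- z).
by rewrite -[z]opprK -xE -br_skew mixed_br_eq0.
Qed.

Lemma hpart_affine_on_lines : affine_on_lines hpart.
Proof.
move=> x y; apply: eq_affine_R (hpart_quadratic x y) => t.
by rewrite mixed_eq0 mulr0 addr0.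
Qed.

Lemma h_affine_affine_prod : affine_prod f.
Proof.
exists (hpart 0), (fun p => (hpart p.1 - hpart 0) + vpart 0 p.2); split.
  move=> a p q /=.
  by rewrite (affine_on_lines_linear hpart_affine_on_lines) vpart_linear; ring.
by case=> x z /=; have := mixed_eq0 x z; rewrite /mixed /vpart /hpart; lra.
Qed.

End Carnot.

Unset Implicit Arguments.

Theorem proposition6p1 (R : realType) (V1 V2 : vectType R)
    (br : V1 -> V1 -> V2) :
  step_two_carnot br -> metivier br ->
  forall f : V1 * V2 -> R, h_affine br f <-> affine_prod f.
Proof.
case=> [V2_nontrivial [br_linr br_linl] br_skew br_spans] br_metivier f.
pose b : {bilinear V1 -> V1 -> V2} :=
  HB.pack br (bilinear_isBilinear.Build R V1 V1 V2 *:%R *:%R br (br_linl, br_linr)).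
have V1_nontrivial := br_spans_nontrivial (br := b) br_spans V2_nontrivial.
split=> [f_haff|f_aff]; last exact: (affine_prod_h_affine b f_aff).
exact: (h_affine_affine_prod (br := b) f_haff br_metivier V1_nontrivial br_skew).
Qed.
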